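(* Let $R>0$, $S^2(R)=\{y\in\mathbb{R}^3:|y|=R\}$, and fix $x\in\mathbb{R}^3$ with $r=|x|$, $0<r\neq R$. For every real $b\neq0$, $$\int_{S^2(R)}\omega(x,y)^{1+ib}\,dS_y=\frac{2\pi R}{r}\cdot\frac{|R^2-r^2|}{b}\cdot\sin\!\left(b\ln\frac{R+r}{|R-r|}\right),$$ and $$\int_{S^2(R)}\omega(x,y)\,dS_y=\frac{2\pi R}{r}\cdot|R^2-r^2|\cdot\ln\frac{R+r}{|R-r|}.$$
   Context: For $x\neq y$, $\omega(x,y)=\left|\dfrac{|x|^2-|y|^2}{|x-y|^2}\right|$; $dS_y$ is the surface measure on $S^2(R)$; $\omega^{1+ib}=e^{(1+ib)\ln\omega}$. *)

From Stdlib Require Import Reals.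
From Coquelicot Require Import Coquelicot.
Open Scope R_scope.

Definition pt := (R * R * R)%type.

Definition nsq (x : pt) : R :=
  let '(x1, x2, x3) := x in x1 ^ 2 + x2 ^ 2 + x3 ^ 2.
Definition norm3 (x : pt) : R := sqrt (nsq x).

Definition dsq (x y : pt) : R :=
  let '(x1, x2, x3) := x in let '(y1, y2, y3) := y in
  (x1 - y1) ^ 2 + (x2 - y2) ^ 2 + (x3 - y3) ^ 2.

Definition omega (x y : pt) : R := Rabs ((nsq x - nsq y) / dsq x y).

Definition Cexp (w : C) : C :=
  (exp (fst w) * cos (snd w), exp (fst w) * sin (snd w)).

Definition Cpow_pos (a : R) (s : C) : C := Cexp (Cmult s (RtoC (ln a))).

Definition sph (Rad th ph : R) : pt :=
  (Rad * sin th * cos ph, Rad * sin th * sin ph, Rad * cos th).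

(* Surface integral over S^2(Rad) w.r.t. the surface measure dS, computed via
   spherical coordinates: dS = Rad^2 sin(th) dth dph. *)
Definition sphere_int (Rad : R) (f : pt -> R) : R :=
  RInt (fun th => RInt (fun ph => f (sph Rad th ph) * (Rad ^ 2 * sin th)) 0 (2 * PI)) 0 PI.

Definition sphere_intC (Rad : R) (f : pt -> C) : C :=
  RInt (V := C_R_CompleteNormedModule)
    (fun th => RInt (V := C_R_CompleteNormedModule)
       (fun ph => scal (Rad ^ 2 * sin th) (f (sph Rad th ph))) 0 (2 * PI)) 0 PI.

(* On the sphere |y| = R, with r = |x|, a = x / r and s = a . y / R, one has
   omega(x, y) = w(s) := |R^2 - r^2| / (r^2 + R^2 - 2 r R s), so both integrands are
   zonal functions h(a . u) of the unit vector u = y / R.  By rotation invariance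
   (Archimedes) the surface integral of such a function is 2 pi R^2 int_{-1}^{1} h(s) ds.
   Rotation invariance is proved without a change of variables: tilting the axis by an
   angle g in the (x1, x3)-plane does not change the integral, because its g-derivative
   is the integral of an exact theta-derivative plus an exact phi-derivative; a rotation
   about the x3-axis is a shift of the 2 pi-periodic phi-integral.  Finally
   w'/w = 2 r R / (r^2 + R^2 - 2 r R s), so w and w cos(b ln w) have antiderivatives
   proportional to ln w and sin(b ln w) / b, and w takes the values (R + r) / |R - r|
   and its inverse at s = 1 and s = -1. *)

From Stdlib Require Import Reals Lra Psatz.
From Coquelicot Require Import Coquelicot.
Open Scope R_scope.

Definition unif_cont3 (g : R -> R -> R -> R) : Prop :=
  forall eps : posreal, exists delta : posreal,
  forall x1 y1 z1 x2 y2 z2, Rabs (x2 - x1) < delta -> Rabs (y2 - y1) < delta ->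
  Rabs (z2 - z1) < delta -> Rabs (g x2 y2 z2 - g x1 y1 z1) < eps.

Definition bounded3 (g : R -> R -> R -> R) : Prop :=
  exists M, forall x y z, Rabs (g x y z) <= M.

Definition regular3 (g : R -> R -> R -> R) : Prop := unif_cont3 g /\ bounded3 g.

Lemma Rabs_minus_diag_lt (x : R) (d : posreal) : Rabs (x - x) < d.
Proof. rewrite Rminus_diag, Rabs_R0. apply cond_pos. Qed.

Lemma unif_cont3_pair f g (e1 e2 : posreal) : unif_cont3 f -> unif_cont3 g ->
  exists delta : posreal, forall x1 y1 z1 x2 y2 z2,
  Rabs (x2 - x1) < delta -> Rabs (y2 - y1) < delta -> Rabs (z2 - z1) < delta ->
  Rabs (f x2 y2 z2 - f x1 y1 z1) < e1 /\ Rabs (g x2 y2 z2 - g x1 y1 z1) < e2.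
Proof.
  intros Uf Ug. destruct (Uf e1) as [d1 H1], (Ug e2) as [d2 H2].
  assert (Hd : 0 < Rmin d1 d2) by (apply Rmin_pos; apply cond_pos).
  exists (mkposreal _ Hd). simpl. intros * Hx Hy Hz.
  pose proof (Rmin_l d1 d2). pose proof (Rmin_r d1 d2).
  split; [apply H1 | apply H2]; lra.
Qed.

Lemma regular3_ext f g : (forall x y z, f x y z = g x y z) -> regular3 f -> regular3 g.
Proof.
  intros E [U [M B]]. split.
  - intros eps. destruct (U eps) as [d Hd]. exists d. intros. rewrite <- !E. auto.
  - exists M. intros. rewrite <- E. auto.
Qed.

Lemma regular3_const c : regular3 (fun _ _ _ => c).
Proof.
  split.
  - intros eps. exists eps. intros. apply Rabs_minus_diag_lt.
  - exists (Rabs c). intros; lra.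
Qed.

Lemma regular3_plus f g : regular3 f -> regular3 g -> regular3 (fun x y z => f x y z + g x y z).
Proof.
  intros [Uf [Mf Bf]] [Ug [Mg Bg]]. split.
  - intros [eps Heps].
    assert (He : 0 < eps / 2) by lra.
    destruct (unif_cont3_pair f g (mkposreal _ He) (mkposreal _ He) Uf Ug) as [d Hd].
    exists d. intros * Hx Hy Hz. destruct (Hd _ _ _ _ _ _ Hx Hy Hz) as [H1 H2]. simpl in *.
    replace (f x2 y2 z2 + g x2 y2 z2 - (f x1 y1 z1 + g x1 y1 z1))
      with ((f x2 y2 z2 - f x1 y1 z1) + (g x2 y2 z2 - g x1 y1 z1)) by ring.
    eapply Rle_lt_trans. apply Rabs_triang. lra.
  - exists (Mf + Mg). intros. eapply Rle_trans. apply Rabs_triang. apply Rplus_le_compat; auto.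
Qed.

Lemma regular3_mult f g : regular3 f -> regular3 g -> regular3 (fun x y z => f x y z * g x y z).
Proof.
  intros [Uf [Mf Bf]] [Ug [Mg Bg]].
  assert (Mf0 : 0 <= Mf) by (eapply Rle_trans; [apply Rabs_pos | apply (Bf 0 0 0)]).
  assert (Mg0 : 0 <= Mg) by (eapply Rle_trans; [apply Rabs_pos | apply (Bg 0 0 0)]).
  split.
  - intros [eps Heps]. set (K := Mf + Mg + 1).
    assert (He : 0 < eps / K) by (apply Rdiv_lt_0_compat; unfold K; lra).
    destruct (unif_cont3_pair f g (mkposreal _ He) (mkposreal _ He) Uf Ug) as [d Hd].
    exists d. intros * Hx Hy Hz. destruct (Hd _ _ _ _ _ _ Hx Hy Hz) as [H1 H2]. simpl in *.
    specialize (Bf x1 y1 z1). specialize (Bg x2 y2 z2).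
    replace (f x2 y2 z2 * g x2 y2 z2 - f x1 y1 z1 * g x1 y1 z1)
      with ((f x2 y2 z2 - f x1 y1 z1) * g x2 y2 z2 + f x1 y1 z1 * (g x2 y2 z2 - g x1 y1 z1)) by ring.
    eapply Rle_lt_trans. apply Rabs_triang. rewrite !Rabs_mult.
    assert (Hsum : eps / K * Mg + Mf * (eps / K) < eps).
    { replace (eps / K * Mg + Mf * (eps / K)) with (eps - eps / K) by (unfold K; field; lra).
      lra. }
    pose proof (Rabs_pos (f x2 y2 z2 - f x1 y1 z1)). pose proof (Rabs_pos (f x1 y1 z1)).
    pose proof (Rabs_pos (g x2 y2 z2)). pose proof (Rabs_pos (g x2 y2 z2 - g x1 y1 z1)).
    nra.
  - exists (Mf * Mg). intros. rewrite Rabs_mult. apply Rmult_le_compat; auto; apply Rabs_pos.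
Qed.

Lemma regular3_opp f : regular3 f -> regular3 (fun x y z => - f x y z).
Proof.
  intros H. apply regular3_ext with (fun x y z => (-1) * f x y z); [intros; ring |].
  apply regular3_mult; auto. apply regular3_const.
Qed.

Lemma regular3_minus f g : regular3 f -> regular3 g -> regular3 (fun x y z => f x y z - g x y z).
Proof. intros. apply regular3_plus; auto. apply regular3_opp; auto. Qed.

Lemma regular3_lipschitz (f : R -> R) :
  (forall a b, Rabs (f b - f a) <= Rabs (b - a)) -> (forall a, Rabs (f a) <= 1) ->
  regular3 (fun x _ _ => f x) /\ regular3 (fun _ y _ => f y) /\ regular3 (fun _ _ z => f z).
Proof.
  intros L B. repeat split; try (exists 1; intros; apply B);
    intros eps; exists eps; intros; eapply Rle_lt_trans; try apply L; auto.
Qed.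

Lemma sin_lipschitz a b : Rabs (sin b - sin a) <= Rabs (b - a).
Proof.
  destruct (MVT_abs sin cos a b) as [c [-> _]].
  - intros; apply derivable_pt_lim_sin.
  - pose proof (COS_bound c). pose proof (Rabs_pos (b - a)).
    assert (Rabs (cos c) <= 1) by (apply Rabs_le; lra). nra.
Qed.

Lemma cos_lipschitz a b : Rabs (cos b - cos a) <= Rabs (b - a).
Proof.
  destruct (MVT_abs cos (fun x => - sin x) a b) as [c [-> _]].
  - intros; apply derivable_pt_lim_cos.
  - pose proof (SIN_bound c). pose proof (Rabs_pos (b - a)).
    assert (Rabs (- sin c) <= 1) by (apply Rabs_le; lra). nra.
Qed.

Lemma sin_regular3 :
  regular3 (fun x _ _ => sin x) /\ regular3 (fun _ y _ => sin y) /\ regular3 (fun _ _ z => sin z).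
Proof. apply regular3_lipschitz. apply sin_lipschitz. intros; apply Rabs_le, SIN_bound. Qed.

Lemma cos_regular3 :
  regular3 (fun x _ _ => cos x) /\ regular3 (fun _ y _ => cos y) /\ regular3 (fun _ _ z => cos z).
Proof. apply regular3_lipschitz. apply cos_lipschitz. intros; apply Rabs_le, COS_bound. Qed.

Ltac regular3_trig :=
  repeat first
    [ assumption
    | apply regular3_plus | apply regular3_minus | apply regular3_mult | apply regular3_opp
    | apply regular3_const
    | exact (proj1 sin_regular3) | exact (proj1 (proj2 sin_regular3))
    | exact (proj2 (proj2 sin_regular3))
    | exact (proj1 cos_regular3) | exact (proj1 (proj2 cos_regular3))
    | exact (proj2 (proj2 cos_regular3)) ].

Lemma regular3_comp (k : R -> R) s :
  (forall t, -1 <= t <= 1 -> continuous k t) -> unif_cont3 s ->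
  (forall x y z, -1 <= s x y z <= 1) -> regular3 (fun x y z => k (s x y z)).
Proof.
  intros Hk Us Bs.
  assert (Hk' : forall t, -1 <= t <= 1 -> continuity_pt k t)
    by (intros t Ht; apply continuity_pt_filterlim, Hk, Ht).
  split.
  - intros eps. destruct (Heine_cor2 Hk' eps) as [d1 Hd1].
    destruct (Us d1) as [d Hd]. exists d. intros.
    rewrite Rabs_minus_sym. apply Hd1; auto. rewrite Rabs_minus_sym. auto.
  - destruct (continuity_ab_maj (fun t => Rabs (k t)) (-1) 1) as [m [Hm _]]; [lra | |].
    + intros t Ht. apply (continuity_pt_comp k Rabs); [auto | apply Rcontinuity_abs].
    + exists (Rabs (k m)). intros. apply Hm. auto.
Qed.

Lemma unif_cont3_continuous g x y z : unif_cont3 g -> continuous (g x y) z.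
Proof.
  intros U. apply continuity_pt_filterlim, continuity_pt_locally. intros eps.
  destruct (U eps) as [d Hd]. exists d. intros. apply Hd; auto; apply Rabs_minus_diag_lt.
Qed.

Lemma unif_cont3_continuity_2d_xz g x y z :
  unif_cont3 g -> continuity_2d_pt (fun u v => g u y v) x z.
Proof.
  intros U eps. destruct (U eps) as [d Hd]. exists d. intros. apply Hd; auto.
  apply Rabs_minus_diag_lt.
Qed.

Lemma unif_cont3_continuity_2d_yz g x y z :
  unif_cont3 g -> continuity_2d_pt (fun u v => g x u v) y z.
Proof.
  intros U eps. destruct (U eps) as [d Hd]. exists d. intros. apply Hd; auto.
  apply Rabs_minus_diag_lt.
Qed.

Lemma unif_cont3_ex_RInt g x y a b : unif_cont3 g -> ex_RInt (g x y) a b.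
Proof.
  intros U. apply (ex_RInt_continuous (V := R_CompleteNormedModule)).
  intros; apply unif_cont3_continuous; auto.
Qed.

Lemma unif_cont3_RInt_continuity_2d g a b x y : unif_cont3 g -> a <= b ->
  continuity_2d_pt (fun u v => RInt (g u v) a b) x y.
Proof.
  intros U Hab [eps Heps].
  assert (He : 0 < eps / (b - a + 1)) by (apply Rdiv_lt_0_compat; lra).
  destruct (U (mkposreal _ He)) as [d Hd]. exists d. intros u v Hu Hv. simpl.
  rewrite <- (RInt_minus (V := R_CompleteNormedModule)) by (apply unif_cont3_ex_RInt; auto).
  eapply Rle_lt_trans.
  - apply abs_RInt_le_const with (M := eps / (b - a + 1)); auto.
    + apply (ex_RInt_minus (V := R_NormedModule)); apply unif_cont3_ex_RInt; auto.
    + intros t _. left. apply (Hd x y t u v t); auto. apply Rabs_minus_diag_lt.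
  - replace ((b - a) * (eps / (b - a + 1))) with (eps - eps / (b - a + 1)) by (field; lra).
    lra.
Qed.

Lemma unif_cont3_ex_RInt_RInt g x a b c d : unif_cont3 g -> a <= b ->
  ex_RInt (fun y => RInt (g x y) a b) c d.
Proof.
  intros U Hab. apply (ex_RInt_continuous (V := R_CompleteNormedModule)). intros y _.
  apply continuity_pt_filterlim, continuity_pt_locally. intros eps.
  destruct (unif_cont3_RInt_continuity_2d g a b x y U Hab eps) as [delta Hd].
  exists delta. intros. apply Hd; auto. apply Rabs_minus_diag_lt.
Qed.

Lemma is_derive_RInt_param_everywhere (f df : R -> R -> R) (a b x : R) :
  (forall u v, is_derive (fun z => f z v) u (df u v)) ->
  (forall u v, continuity_2d_pt df u v) ->
  (forall u, ex_RInt (f u) a b) ->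
  is_derive (fun u => RInt (f u) a b) x (RInt (df x) a b).
Proof.
  intros D C I.
  rewrite (RInt_ext (df x) (fun v => Derive (fun z => f z v) x))
    by (intros; symmetry; apply is_derive_unique, D).
  apply (is_derive_RInt_param f).
  - apply filter_forall. intros u v _. eexists; apply D.
  - intros v _. apply continuity_2d_pt_ext with df; [|apply C].
    intros; symmetry; apply is_derive_unique, D.
  - apply filter_forall. exact I.
Qed.

Lemma RInt_periodic_shift (G : R -> R) T b : (forall u, continuous G u) ->
  (forall u, G (u + T) = G u) ->
  RInt (fun p => G (p - b)) 0 T = RInt G 0 T.
Proof.
  intros HC HP.
  assert (EX : forall x y, ex_RInt G x y)
    by (intros; apply (ex_RInt_continuous (V := R_CompleteNormedModule)); intros; apply HC).
  assert (Hshift : forall c x y, RInt (fun p => G (p + c)) x y = RInt G (x + c) (y + c)).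
  { intros c x y.
    rewrite (RInt_ext (V := R_CompleteNormedModule) _ (fun p => scal 1 (G (1 * p + c))))
      by (intros; unfold scal; simpl; unfold mult; simpl; rewrite !Rmult_1_l; reflexivity).
    rewrite (RInt_comp_lin (V := R_CompleteNormedModule)) by apply EX.
    rewrite !Rmult_1_l. reflexivity. }
  rewrite (Hshift (- b)). rewrite Rplus_0_l.
  rewrite <- (RInt_Chasles (V := R_CompleteNormedModule) G (- b) 0) by apply EX.
  replace (RInt G (- b) 0) with (RInt G (T - b) T).
  - unfold plus; simpl. rewrite Rplus_comm.
    replace (T + - b) with (T - b) by ring.
    apply (RInt_Chasles (V := R_CompleteNormedModule)); apply EX.
  - rewrite (RInt_ext G (fun p => G (p + T)) (- b) 0) by (intros; symmetry; apply HP).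
    rewrite Hshift. f_equal; ring.
Qed.

Lemma polar_angle a1 a2 :
  exists b, a1 = sqrt (a1 ^ 2 + a2 ^ 2) * cos b /\ a2 = sqrt (a1 ^ 2 + a2 ^ 2) * sin b.
Proof.
  set (rho := sqrt (a1 ^ 2 + a2 ^ 2)).
  assert (Hrho2 : rho * rho = a1 ^ 2 + a2 ^ 2) by (apply sqrt_sqrt; nra).
  assert (Hrho0 : 0 <= rho) by apply sqrt_pos.
  destruct (Req_dec rho 0) as [Z | NZ].
  { exists 0. rewrite Z in *. split; nra. }
  set (c := a1 / rho).
  assert (Hc2 : c * c + (a2 / rho) * (a2 / rho) = 1)
    by (unfold c; field_simplify; [rewrite <- Hrho2; field |]; lra).
  assert (Hc : -1 <= c <= 1) by (split; nra).
  assert (Hs : sqrt (1 - c²) = Rabs (a2 / rho)).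
  { rewrite <- sqrt_Rsqr_abs. f_equal. unfold Rsqr. lra. }
  destruct (Rle_dec 0 a2) as [P | N].
  - exists (acos c). rewrite cos_acos, sin_acos, Hs by auto.
    rewrite Rabs_pos_eq by (apply Rdiv_le_0_compat; lra). unfold c. split; field; lra.
  - exists (- acos c). rewrite cos_neg, sin_neg, cos_acos, sin_acos, Hs by auto.
    rewrite Rabs_left by (apply Rdiv_neg_pos; lra). unfold c. split; field; lra.
Qed.

Definition dot_unit (a1 a2 a3 t p : R) : R :=
  a1 * sin t * cos p + a2 * sin t * sin p + a3 * cos t.

(* [tilted_cos g t p] is [a . u(t, p)] for the unit axis [a = (sin g, 0, cos g)]. *)
Definition tilted_cos (g t p : R) : R := sin g * sin t * cos p + cos g * cos t.
Definition tilted_cos_dg (g t p : R) : R := cos g * sin t * cos p - sin g * cos t.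
Definition tilted_cos_dt (g t p : R) : R := sin g * cos t * cos p - cos g * sin t.

Lemma dot_unit_bound a1 a2 a3 t p : a1 ^ 2 + a2 ^ 2 + a3 ^ 2 = 1 ->
  -1 <= dot_unit a1 a2 a3 t p <= 1.
Proof.
  intros Ha. unfold dot_unit.
  pose proof (sin2_cos2 t) as Et. pose proof (sin2_cos2 p) as Ep. unfold Rsqr in *.
  replace (a1 * sin t * cos p + a2 * sin t * sin p + a3 * cos t)
    with (a1 * (sin t * cos p) + a2 * (sin t * sin p) + a3 * cos t) by ring.
  set (u1 := sin t * cos p). set (u2 := sin t * sin p). set (u3 := cos t).
  assert (Hu : u1 * u1 + u2 * u2 + u3 * u3 = 1).
  { unfold u1, u2, u3. transitivity (sin t * sin t * (sin p * sin p + cos p * cos p) + cos t * cos t);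
      [ring | rewrite Ep; lra]. }
  assert (Eminus : (a1 - u1) ^ 2 + (a2 - u2) ^ 2 + (a3 - u3) ^ 2
    = (a1 ^ 2 + a2 ^ 2 + a3 ^ 2) - 2 * (a1 * u1 + a2 * u2 + a3 * u3)
      + (u1 * u1 + u2 * u2 + u3 * u3)) by ring.
  assert (Eplus : (a1 + u1) ^ 2 + (a2 + u2) ^ 2 + (a3 + u3) ^ 2
    = (a1 ^ 2 + a2 ^ 2 + a3 ^ 2) + 2 * (a1 * u1 + a2 * u2 + a3 * u3)
      + (u1 * u1 + u2 * u2 + u3 * u3)) by ring.
  pose proof (pow2_ge_0 (a1 - u1)). pose proof (pow2_ge_0 (a2 - u2)).
  pose proof (pow2_ge_0 (a3 - u3)). pose proof (pow2_ge_0 (a1 + u1)).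
  pose proof (pow2_ge_0 (a2 + u2)). pose proof (pow2_ge_0 (a3 + u3)).
  split; lra.
Qed.

Lemma tilted_cos_bound g t p : -1 <= tilted_cos g t p <= 1.
Proof.
  replace (tilted_cos g t p) with (dot_unit (sin g) 0 (cos g) t p)
    by (unfold tilted_cos, dot_unit; ring).
  apply dot_unit_bound. pose proof (sin2_cos2 g). unfold Rsqr in *. nra.
Qed.

(* The g-derivative of [h (tilted_cos g t p) * sin t] written as
   [- d/dt (cos p * sin t * h) + cos t * d/dp (sin p * h)]. *)
Lemma tilted_cos_dg_decomposition A A' g t p :
  A' * tilted_cos_dg g t p * sin t =
  - (cos p * (cos t * A + sin t * (A' * tilted_cos_dt g t p)))
  + cos t * (cos p * A + sin p * (A' * - (sin g * sin t * sin p))).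
Proof.
  unfold tilted_cos_dg, tilted_cos_dt. pose proof (sin2_cos2 p) as E. unfold Rsqr in E.
  replace (sin g * cos t) with (sin g * cos t * (sin p * sin p + cos p * cos p)) at 1
    by (rewrite E; ring).
  ring.
Qed.

Definition C1_on (h h' : R -> R) : Prop :=
  forall s, -1 <= s <= 1 -> is_derive h s (h' s) /\ continuous h' s.

Section ZonalIntegral.

Variables h h' : R -> R.
Hypothesis Hh : C1_on h h'.

Lemma C1_on_ex_derive s : -1 <= s <= 1 -> ex_derive h s.
Proof. intros Hs. exists (h' s). apply Hh, Hs. Qed.

Lemma C1_on_Derive s : -1 <= s <= 1 -> Derive h s = h' s.
Proof. intros Hs. apply is_derive_unique, Hh, Hs. Qed.

Lemma C1_on_continuous s : -1 <= s <= 1 -> continuous h s.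
Proof.
  intros Hs. apply (ex_derive_continuous (K := R_AbsRing) (V := R_NormedModule)).
  apply C1_on_ex_derive, Hs.
Qed.

Lemma regular3_C1_comp s : regular3 s -> (forall x y z, -1 <= s x y z <= 1) ->
  regular3 (fun x y z => h (s x y z)) /\ regular3 (fun x y z => h' (s x y z)).
Proof.
  intros [Us _] Bs. split; apply regular3_comp; auto.
  - apply C1_on_continuous.
  - intros; apply Hh; auto.
Qed.

Lemma regular3_h_tilted :
  regular3 (fun g t p => h (tilted_cos g t p)) /\ regular3 (fun g t p => h' (tilted_cos g t p)).
Proof.
  apply regular3_C1_comp; [unfold tilted_cos; regular3_trig | apply tilted_cos_bound].
Qed.

Ltac auto_derive_h :=
  auto_derive;
  [ apply C1_on_ex_derive, tilted_cos_bound
  | rewrite C1_on_Derive by apply tilted_cos_bound ].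

Definition zonal_int (g : R) : R :=
  RInt (fun t => RInt (fun p => h (tilted_cos g t p) * sin t) 0 (2 * PI)) 0 PI.

Definition zonal_int_dg (g t p : R) : R := h' (tilted_cos g t p) * tilted_cos_dg g t p * sin t.

Definition polar_flux (g t : R) : R :=
  RInt (fun p => cos p * sin t * h (tilted_cos g t p)) 0 (2 * PI).

Definition polar_flux_dt (g t p : R) : R :=
  cos p * (cos t * h (tilted_cos g t p) + sin t * (h' (tilted_cos g t p) * tilted_cos_dt g t p)).

Definition azimuthal_flux_dp (g t p : R) : R :=
  cos p * h (tilted_cos g t p) + sin p * (h' (tilted_cos g t p) * - (sin g * sin t * sin p)).

Lemma regular3_zonal_integrands :
  regular3 (fun g t p => h (tilted_cos g t p) * sin t) /\ regular3 zonal_int_dg /\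
  regular3 (fun g t p => cos p * sin t * h (tilted_cos g t p)) /\
  regular3 polar_flux_dt /\ regular3 azimuthal_flux_dp.
Proof.
  destruct regular3_h_tilted as [Rh Rh'].
  unfold zonal_int_dg, polar_flux_dt, azimuthal_flux_dp, tilted_cos_dg, tilted_cos_dt.
  repeat split; regular3_trig.
Qed.

Lemma is_derive_zonal_int g :
  is_derive zonal_int g (RInt (fun t => RInt (zonal_int_dg g t) 0 (2 * PI)) 0 PI).
Proof.
  destruct regular3_zonal_integrands as [[Uf _] [[Udg _] _]].
  pose proof PI_RGT_0.
  apply (is_derive_RInt_param_everywhere
    (fun u t => RInt (fun p => h (tilted_cos u t p) * sin t) 0 (2 * PI))
    (fun u t => RInt (zonal_int_dg u t) 0 (2 * PI))).
  - intros u v. apply (is_derive_RInt_param_everywhere (fun z p => h (tilted_cos z v p) * sin v)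
      (fun z => zonal_int_dg z v)).
    + intros. unfold zonal_int_dg, tilted_cos, tilted_cos_dg. auto_derive_h. ring.
    + intros. apply (unif_cont3_continuity_2d_xz zonal_int_dg), Udg.
    + intros. apply (unif_cont3_ex_RInt (fun g t p => h (tilted_cos g t p) * sin t)), Uf.
  - intros. apply unif_cont3_RInt_continuity_2d; [exact Udg | lra].
  - intros. apply (unif_cont3_ex_RInt_RInt (fun g t p => h (tilted_cos g t p) * sin t));
      [exact Uf | lra].
Qed.

Lemma RInt_azimuthal_flux_dp g t : RInt (azimuthal_flux_dp g t) 0 (2 * PI) = 0.
Proof.
  destruct regular3_zonal_integrands as [_ [_ [_ [_ [Udp _]]]]].
  erewrite is_RInt_unique.
  2:{ apply (is_RInt_derive (V := R_CompleteNormedModule) (fun p => sin p * h (tilted_cos g t p))).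
    - intros. unfold azimuthal_flux_dp, tilted_cos. auto_derive_h. ring.
    - intros. apply unif_cont3_continuous, Udp. }
  rewrite sin_2PI, sin_0. unfold minus, plus, opp; simpl. ring.
Qed.

Lemma is_derive_polar_flux g t : is_derive (polar_flux g) t (RInt (polar_flux_dt g t) 0 (2 * PI)).
Proof.
  destruct regular3_zonal_integrands as [_ [_ [[Uk _] [[Udt _] _]]]].
  apply (is_derive_RInt_param_everywhere (fun u p => cos p * sin u * h (tilted_cos g u p))
    (polar_flux_dt g)).
  - intros. unfold polar_flux_dt, tilted_cos, tilted_cos_dt. auto_derive_h. ring.
  - intros. apply (unif_cont3_continuity_2d_yz polar_flux_dt), Udt.
  - intros. apply (unif_cont3_ex_RInt (fun g t p => cos p * sin t * h (tilted_cos g t p))), Uk.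
Qed.

Lemma polar_flux_pole g t : sin t = 0 -> polar_flux g t = 0.
Proof.
  intros Ht. unfold polar_flux. rewrite Ht.
  rewrite (RInt_ext _ (fun _ => 0)) by (intros; rewrite Rmult_0_r, Rmult_0_l; reflexivity).
  rewrite (RInt_const (V := R_CompleteNormedModule)).
  unfold scal; simpl; unfold mult; simpl. ring.
Qed.

Lemma RInt_zonal_int_dg g t :
  RInt (zonal_int_dg g t) 0 (2 * PI) = - RInt (polar_flux_dt g t) 0 (2 * PI).
Proof.
  destruct regular3_zonal_integrands as [_ [_ [_ [[Udt _] [Udp _]]]]].
  rewrite (RInt_ext _ (fun p => plus (opp (polar_flux_dt g t p))
                                     (scal (cos t) (azimuthal_flux_dp g t p)))).
  2:{ intros p _. unfold zonal_int_dg, polar_flux_dt, azimuthal_flux_dp.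
      rewrite (tilted_cos_dg_decomposition (h (tilted_cos g t p))). reflexivity. }
  rewrite (RInt_plus (V := R_CompleteNormedModule)), (RInt_opp (V := R_CompleteNormedModule)),
    (RInt_scal (V := R_CompleteNormedModule)), RInt_azimuthal_flux_dp.
  - unfold opp, scal, plus; simpl. unfold mult; simpl. ring.
  - apply unif_cont3_ex_RInt, Udp.
  - apply unif_cont3_ex_RInt, Udt.
  - apply (ex_RInt_opp (V := R_CompleteNormedModule)), unif_cont3_ex_RInt, Udt.
  - apply (ex_RInt_scal (V := R_CompleteNormedModule)), unif_cont3_ex_RInt, Udp.
Qed.

Lemma zonal_int_derivative_zero g : RInt (fun t => RInt (zonal_int_dg g t) 0 (2 * PI)) 0 PI = 0.
Proof.
  destruct regular3_zonal_integrands as [_ [_ [_ [[Udt _] _]]]].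
  assert (Hflux : is_RInt (fun t => RInt (polar_flux_dt g t) 0 (2 * PI)) 0 PI
                    (minus (polar_flux g PI) (polar_flux g 0))).
  { apply (is_RInt_derive (V := R_CompleteNormedModule)).
    - intros. apply is_derive_polar_flux.
    - intros t _. apply continuity_pt_filterlim, continuity_pt_locally. intros eps.
      destruct (unif_cont3_RInt_continuity_2d polar_flux_dt 0 (2 * PI) g t Udt) with eps
        as [delta Hd]; [pose proof PI_RGT_0; lra |].
      exists delta. intros. apply Hd; auto. apply Rabs_minus_diag_lt. }
  rewrite (RInt_ext _ (fun t => opp (RInt (polar_flux_dt g t) 0 (2 * PI))))
    by (intros; apply RInt_zonal_int_dg).
  rewrite (RInt_opp (V := R_CompleteNormedModule)) by (eexists; exact Hflux).
  rewrite (is_RInt_unique _ _ _ _ Hflux), !polar_flux_pole by (apply sin_PI || apply sin_0).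
  unfold minus, plus, opp; simpl. ring.
Qed.

Lemma zonal_int_const g : zonal_int g = zonal_int 0.
Proof.
  destruct (MVT_gen zonal_int 0 g (fun _ => 0)) as [c [_ Hc]]; [| | lra].
  - intros u _. rewrite <- (zonal_int_derivative_zero u). apply is_derive_zonal_int.
  - intros u _. apply continuity_pt_filterlim.
    apply (ex_derive_continuous (K := R_AbsRing) (V := R_NormedModule)).
    eexists; apply is_derive_zonal_int.
Qed.

Lemma zonal_int_0 : zonal_int 0 = 2 * PI * RInt h (-1) 1.
Proof.
  unfold zonal_int, tilted_cos. rewrite sin_0, cos_0.
  rewrite (RInt_ext (V := R_CompleteNormedModule) _
    (fun t => scal (- (2 * PI)) (scal (- sin t) (h (cos t))))).
  2:{ intros t _.
      rewrite (RInt_ext (V := R_CompleteNormedModule) _ (fun _ => h (cos t) * sin t))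
        by (intros; f_equal; f_equal; ring).
      rewrite (RInt_const (V := R_CompleteNormedModule)).
      unfold scal; simpl; unfold mult; simpl. ring. }
  apply is_RInt_unique.
  replace (2 * PI * RInt h (-1) 1) with (scal (- (2 * PI)) (RInt h (cos 0) (cos PI))).
  - apply (is_RInt_scal (V := R_CompleteNormedModule)).
    apply (is_RInt_comp (V := R_CompleteNormedModule)).
    + intros. apply C1_on_continuous, COS_bound.
    + intros. split; [auto_derive; auto; ring |].
      apply (ex_derive_continuous (K := R_AbsRing) (V := R_NormedModule) (fun y => - sin y)).
      auto_derive; auto.
  - rewrite cos_0, cos_PI, <- (opp_RInt_swap (V := R_CompleteNormedModule)).
    + unfold scal, opp; simpl; unfold mult; simpl. ring.
    + apply (ex_RInt_continuous (V := R_CompleteNormedModule)). intros z Hz.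
      rewrite Rmin_left, Rmax_right in Hz by lra. apply C1_on_continuous. exact Hz.
Qed.

Lemma regular3_h_dot_unit a1 a2 a3 : a1 ^ 2 + a2 ^ 2 + a3 ^ 2 = 1 ->
  regular3 (fun _ t p => h (dot_unit a1 a2 a3 t p) * sin t).
Proof.
  intros Ha. apply regular3_mult; [| regular3_trig].
  apply (regular3_C1_comp (fun _ t p => dot_unit a1 a2 a3 t p)).
  - unfold dot_unit. regular3_trig.
  - intros. apply dot_unit_bound, Ha.
Qed.

Lemma ex_RInt_sphere_dot_unit a1 a2 a3 : a1 ^ 2 + a2 ^ 2 + a3 ^ 2 = 1 ->
  (forall t, ex_RInt (fun p => h (dot_unit a1 a2 a3 t p) * sin t) 0 (2 * PI)) /\
  ex_RInt (fun t => RInt (fun p => h (dot_unit a1 a2 a3 t p) * sin t) 0 (2 * PI)) 0 PI.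
Proof.
  intros Ha. destruct (regular3_h_dot_unit a1 a2 a3 Ha) as [U _]. split.
  - intros t. apply (unif_cont3_ex_RInt _ 0 t _ _ U).
  - apply (unif_cont3_ex_RInt_RInt (fun _ t p => h (dot_unit a1 a2 a3 t p) * sin t) 0);
      [exact U | pose proof PI_RGT_0; lra].
Qed.
Lemma RInt_sphere_dot_unit a1 a2 a3 : a1 ^ 2 + a2 ^ 2 + a3 ^ 2 = 1 ->
  RInt (fun t => RInt (fun p => h (dot_unit a1 a2 a3 t p) * sin t) 0 (2 * PI)) 0 PI
  = 2 * PI * RInt h (-1) 1.
Proof.
  intros Ha. destruct (polar_angle a1 a2) as [b [E1 E2]].
  set (rho := sqrt (a1 ^ 2 + a2 ^ 2)) in *.
  assert (Ha3 : -1 <= a3 <= 1) by (split; nra).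
  set (g := acos a3).
  assert (Cg : cos g = a3) by (apply cos_acos, Ha3).
  assert (Sg : sin g = rho) by (unfold g, rho; rewrite sin_acos by auto; f_equal; unfold Rsqr; lra).
  rewrite <- zonal_int_0, <- (zonal_int_const g).
  apply RInt_ext. intros t _.
  rewrite (RInt_ext (V := R_CompleteNormedModule) _
    (fun p => h (tilted_cos g t (p - b)) * sin t)).
  2:{ intros. unfold tilted_cos, dot_unit. rewrite Sg, Cg, cos_minus, E1, E2.
      f_equal; f_equal; ring. }
  apply (RInt_periodic_shift (fun p => h (tilted_cos g t p) * sin t)).
  - intros. destruct regular3_h_tilted as [Rh _].
    apply (unif_cont3_continuous (fun g t p => h (tilted_cos g t p) * sin t)). regular3_trig.
  - intros. unfold tilted_cos. rewrite cos_plus, cos_2PI, sin_2PI. f_equal; f_equal; ring.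
Qed.

End ZonalIntegral.

Lemma RInt_C_pair (f g : R -> R) a b : ex_RInt f a b -> ex_RInt g a b ->
  RInt (V := C_R_CompleteNormedModule) (fun t => (f t, g t)) a b = (RInt f a b, RInt g a b).
Proof.
  intros If Ig. apply (is_RInt_unique (V := C_R_CompleteNormedModule)).
  apply (is_RInt_fct_extend_pair (U := R_NormedModule) (V := R_NormedModule));
    apply (RInt_correct (V := R_CompleteNormedModule)); assumption.
Qed.

Lemma sphere_int_zonal Rad (f : pt -> R) h h' a1 a2 a3 :
  C1_on h h' -> a1 ^ 2 + a2 ^ 2 + a3 ^ 2 = 1 ->
  (forall t p, f (sph Rad t p) * (Rad ^ 2 * sin t) = h (dot_unit a1 a2 a3 t p) * sin t) ->
  sphere_int Rad f = 2 * PI * RInt h (-1) 1.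
Proof.
  intros Hh Ha E. rewrite <- (RInt_sphere_dot_unit h h' Hh a1 a2 a3 Ha). unfold sphere_int.
  apply RInt_ext. intros. apply RInt_ext. intros. apply E.
Qed.

Lemma sphere_intC_zonal Rad (f : pt -> C) h1 h1' h2 h2' a1 a2 a3 :
  C1_on h1 h1' -> C1_on h2 h2' -> a1 ^ 2 + a2 ^ 2 + a3 ^ 2 = 1 ->
  (forall t p, scal (Rad ^ 2 * sin t) (f (sph Rad t p)) =
     (h1 (dot_unit a1 a2 a3 t p) * sin t, h2 (dot_unit a1 a2 a3 t p) * sin t)) ->
  sphere_intC Rad f = (2 * PI * RInt h1 (-1) 1, 2 * PI * RInt h2 (-1) 1).
Proof.
  intros H1 H2 Ha E.
  destruct (ex_RInt_sphere_dot_unit h1 h1' H1 a1 a2 a3 Ha) as [I1 J1].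
  destruct (ex_RInt_sphere_dot_unit h2 h2' H2 a1 a2 a3 Ha) as [I2 J2].
  rewrite <- (RInt_sphere_dot_unit h1 h1' H1 a1 a2 a3 Ha),
    <- (RInt_sphere_dot_unit h2 h2' H2 a1 a2 a3 Ha), <- RInt_C_pair by assumption.
  unfold sphere_intC. apply (RInt_ext (V := C_R_CompleteNormedModule)). intros t _.
  transitivity (RInt (V := C_R_CompleteNormedModule) (fun p =>
    (h1 (dot_unit a1 a2 a3 t p) * sin t, h2 (dot_unit a1 a2 a3 t p) * sin t)) 0 (2 * PI)).
  - apply (RInt_ext (V := C_R_CompleteNormedModule)). intros. apply E.
  - apply RInt_C_pair; [apply I1 | apply I2].
Qed.

Lemma scal_C_pair (k a b : R) : scal k ((a, b) : C) = (k * a, k * b).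
Proof. reflexivity. Qed.

Lemma Cpow_pos_1_i a b : 0 < a ->
  Cpow_pos a (1, b) = (a * cos (b * ln a), a * sin (b * ln a)).
Proof.
  intros Ha. unfold Cpow_pos, Cexp, Cmult, RtoC; simpl.
  replace (1 * ln a - b * 0) with (ln a) by ring.
  replace (1 * 0 + b * ln a) with (b * ln a) by ring.
  rewrite exp_ln by exact Ha. reflexivity.
Qed.

Definition law_of_cosines (r Rad s : R) : R := r ^ 2 + Rad ^ 2 - 2 * r * Rad * s.

Definition omega_zonal (r Rad s : R) : R := Rabs (Rad ^ 2 - r ^ 2) / law_of_cosines r Rad s.

Lemma norm3_sq x : norm3 x ^ 2 = nsq x.
Proof.
  unfold norm3. apply pow2_sqrt. destruct x as [[x1 x2] x3]. unfold nsq. nra.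
Qed.

Lemma direction_unit x : 0 < norm3 x ->
  (fst (fst x) / norm3 x) ^ 2 + (snd (fst x) / norm3 x) ^ 2 + (snd x / norm3 x) ^ 2 = 1.
Proof.
  intros Hr. pose proof (norm3_sq x) as Hn. destruct x as [[x1 x2] x3]. cbn [fst snd].
  unfold nsq in Hn. unfold Rdiv. rewrite !Rpow_mult_distr, <- !Rmult_plus_distr_r, <- Hn.
  field. lra.
Qed.

Lemma nsq_sph Rad t p : nsq (sph Rad t p) = Rad ^ 2.
Proof.
  unfold nsq, sph. pose proof (sin2_cos2 t) as Et. pose proof (sin2_cos2 p) as Ep.
  unfold Rsqr in *.
  transitivity (Rad ^ 2 * (sin t * sin t * (sin p * sin p + cos p * cos p) + cos t * cos t));
    [ring | rewrite Ep, Rmult_1_r, Et; ring].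
Qed.

Lemma dsq_sph x Rad t p : 0 < norm3 x ->
  dsq x (sph Rad t p) = law_of_cosines (norm3 x) Rad
    (dot_unit (fst (fst x) / norm3 x) (snd (fst x) / norm3 x) (snd x / norm3 x) t p).
Proof.
  intros Hr. pose proof (norm3_sq x) as Hn. pose proof (nsq_sph Rad t p) as Hs.
  destruct x as [[x1 x2] x3]. set (r := norm3 (x1, x2, x3)) in *.
  unfold dsq, law_of_cosines, dot_unit. unfold nsq, sph in *. simpl.
  transitivity ((x1 ^ 2 + x2 ^ 2 + x3 ^ 2)
      - 2 * Rad * (x1 * sin t * cos p + x2 * sin t * sin p + x3 * cos t)
      + ((Rad * sin t * cos p) ^ 2 + (Rad * sin t * sin p) ^ 2 + (Rad * cos t) ^ 2)); [ring |].
  rewrite Hs, <- Hn. field. lra.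
Qed.

Lemma dsq_nonneg x y : 0 <= dsq x y.
Proof.
  destruct x as [[x1 x2] x3], y as [[y1 y2] y3]. unfold dsq.
  pose proof (pow2_ge_0 (x1 - y1)). pose proof (pow2_ge_0 (x2 - y2)).
  pose proof (pow2_ge_0 (x3 - y3)). lra.
Qed.

Lemma omega_sph x Rad t p : 0 < norm3 x ->
  omega x (sph Rad t p) = omega_zonal (norm3 x) Rad
    (dot_unit (fst (fst x) / norm3 x) (snd (fst x) / norm3 x) (snd x / norm3 x) t p).
Proof.
  intros Hr. unfold omega, omega_zonal.
  rewrite <- dsq_sph, nsq_sph, <- norm3_sq by exact Hr.
  unfold Rdiv. rewrite Rabs_mult, Rabs_inv, Rabs_minus_sym, (Rabs_pos_eq (dsq _ _)); [reflexivity |].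
  apply dsq_nonneg.
Qed.

Lemma RInt_antiderivative h h' P : C1_on h h' ->
  (forall s, -1 <= s <= 1 -> is_derive P s (h s)) -> RInt h (-1) 1 = P 1 - P (-1) :> R.
Proof.
  intros Hh D. apply is_RInt_unique.
  apply (is_RInt_derive (V := R_CompleteNormedModule) P h); intros s Hs;
    rewrite Rmin_left, Rmax_right in Hs by lra.
  - apply D, Hs.
  - apply (C1_on_continuous h h' Hh), Hs.
Qed.

Section Kernels.

Variables r Rad : R.
Hypotheses (Hr : 0 < r) (HR : 0 < Rad) (Hne : r <> Rad).

Lemma law_of_cosines_pos s : -1 <= s <= 1 -> 0 < law_of_cosines r Rad s.
Proof.
  intros Hs. unfold law_of_cosines.
  assert (0 < (r - Rad) ^ 2) by (apply pow2_gt_0; lra).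
  assert (0 <= 2 * r * Rad * (1 - s)) by (apply Rmult_le_pos; nra).
  nra.
Qed.

Lemma Rabs_sq_diff_pos : 0 < Rabs (Rad ^ 2 - r ^ 2).
Proof.
  apply Rabs_pos_lt. intro E.
  assert (Hprod : (Rad - r) * (Rad + r) = 0) by (rewrite <- E; ring).
  apply Rmult_integral in Hprod. lra.
Qed.

Lemma omega_zonal_pos s : -1 <= s <= 1 -> 0 < omega_zonal r Rad s.
Proof.
  intros Hs. apply Rdiv_lt_0_compat; [apply Rabs_sq_diff_pos | apply law_of_cosines_pos, Hs].
Qed.

Lemma ln_omega_zonal_endpoints :
  ln (omega_zonal r Rad 1) = ln ((Rad + r) / Rabs (Rad - r)) /\
  ln (omega_zonal r Rad (-1)) = - ln ((Rad + r) / Rabs (Rad - r)).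
Proof.
  set (q := Rabs (Rad - r)).
  assert (Hq : 0 < q) by (apply Rabs_pos_lt; lra).
  assert (Hc : Rabs (Rad ^ 2 - r ^ 2) = q * (Rad + r)).
  { unfold q. replace (Rad ^ 2 - r ^ 2) with ((Rad - r) * (Rad + r)) by ring.
    rewrite Rabs_mult, (Rabs_pos_eq (Rad + r)) by lra. reflexivity. }
  assert (Hq2 : q ^ 2 = (Rad - r) ^ 2) by (unfold q; apply pow2_abs).
  unfold omega_zonal, law_of_cosines. rewrite Hc. split.
  - f_equal. replace (r ^ 2 + Rad ^ 2 - 2 * r * Rad * 1) with (q ^ 2) by (rewrite Hq2; ring).
    field. lra.
  - rewrite <- ln_Rinv by (apply Rdiv_lt_0_compat; lra). f_equal. field. nra.
Qed.

Definition kernel_cos (b s : R) : R :=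
  Rad ^ 2 * (omega_zonal r Rad s * cos (b * ln (omega_zonal r Rad s))).
Definition kernel_sin (b s : R) : R :=
  Rad ^ 2 * (omega_zonal r Rad s * sin (b * ln (omega_zonal r Rad s))).

Definition kernel_cos' (b s : R) : R :=
  Rad ^ 2 * (omega_zonal r Rad s * (2 * r * Rad) / law_of_cosines r Rad s
    * (cos (b * ln (omega_zonal r Rad s)) - b * sin (b * ln (omega_zonal r Rad s)))).
Definition kernel_sin' (b s : R) : R :=
  Rad ^ 2 * (omega_zonal r Rad s * (2 * r * Rad) / law_of_cosines r Rad s
    * (sin (b * ln (omega_zonal r Rad s)) + b * cos (b * ln (omega_zonal r Rad s)))).

Lemma is_derive_omega_zonal s : -1 <= s <= 1 ->
  is_derive (omega_zonal r Rad) s (omega_zonal r Rad s * (2 * r * Rad) / law_of_cosines r Rad s).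
Proof.
  intros Hs. pose proof (law_of_cosines_pos s Hs). unfold omega_zonal, law_of_cosines in *.
  generalize (Rabs (Rad ^ 2 - r ^ 2)). intros c. auto_derive; [lra |]. field. lra.
Qed.

Ltac kernel_side_conditions Hs :=
  repeat split;
  match goal with
  | |- ex_derive (fun x => omega_zonal _ _ x) _ => eexists; apply is_derive_omega_zonal, Hs
  | |- ex_derive (fun x => law_of_cosines _ _ x) _ => unfold law_of_cosines; auto_derive; trivial
  | |- 0 < omega_zonal _ _ _ => apply omega_zonal_pos, Hs
  | |- law_of_cosines _ _ _ <> 0 => apply Rgt_not_eq, law_of_cosines_pos, Hs
  | |- True => trivial
  end.

Ltac replace_Derive_omega_zonal Hs :=
  match goal with |- context [Derive ?f ?x] =>
    replace (Derive f x) with (omega_zonal r Rad x * (2 * r * Rad) / law_of_cosines r Rad x)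
      by (symmetry; apply is_derive_unique, is_derive_omega_zonal, Hs) end.

(* [auto_derive] expands the powers inside [Rabs], which [field] treats as an atom. *)
Ltac omega_zonal_field Hs :=
  pose proof (law_of_cosines_pos _ Hs); pose proof (omega_zonal_pos _ Hs);
  pose proof Rabs_sq_diff_pos;
  try replace (Rad * (Rad * 1) - r * (r * 1)) with (Rad ^ 2 - r ^ 2) by ring;
  unfold omega_zonal in *;
  field; repeat split; first [assumption | apply Rgt_not_eq; assumption || nra].

Ltac kernel_derivative Hs :=
  auto_derive;
  [ kernel_side_conditions Hs
  | replace_Derive_omega_zonal Hs; unfold kernel_cos, kernel_sin;
    rewrite ?Rmult_0_l, ?cos_0; omega_zonal_field Hs ].

Lemma C1_on_kernel_cos b : C1_on (kernel_cos b) (kernel_cos' b).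
Proof.
  intros s Hs. split.
  - unfold kernel_cos, kernel_cos'. kernel_derivative Hs.
  - apply (ex_derive_continuous (K := R_AbsRing) (V := R_NormedModule)).
    unfold kernel_cos'. auto_derive. kernel_side_conditions Hs.
Qed.

Lemma C1_on_kernel_sin b : C1_on (kernel_sin b) (kernel_sin' b).
Proof.
  intros s Hs. split.
  - unfold kernel_sin, kernel_sin'. kernel_derivative Hs.
  - apply (ex_derive_continuous (K := R_AbsRing) (V := R_NormedModule)).
    unfold kernel_sin'. auto_derive. kernel_side_conditions Hs.
Qed.

Lemma RInt_kernel_cos_0 :
  RInt (kernel_cos 0) (-1) 1
  = Rad ^ 2 * Rabs (Rad ^ 2 - r ^ 2) / (2 * r * Rad) * (2 * ln ((Rad + r) / Rabs (Rad - r))) :> R.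
Proof.
  rewrite (RInt_antiderivative _ _
    (fun s => Rad ^ 2 * Rabs (Rad ^ 2 - r ^ 2) / (2 * r * Rad) * ln (omega_zonal r Rad s))
    (C1_on_kernel_cos 0)).
  - destruct ln_omega_zonal_endpoints as [-> ->]. ring.
  - intros s Hs. kernel_derivative Hs.
Qed.

Lemma RInt_kernel_cos b : b <> 0 ->
  RInt (kernel_cos b) (-1) 1
  = Rad ^ 2 * Rabs (Rad ^ 2 - r ^ 2) / (b * (2 * r * Rad))
    * (2 * sin (b * ln ((Rad + r) / Rabs (Rad - r)))) :> R.
Proof.
  intros Hb.
  rewrite (RInt_antiderivative _ _ (fun s => Rad ^ 2 * Rabs (Rad ^ 2 - r ^ 2) / (b * (2 * r * Rad))
    * sin (b * ln (omega_zonal r Rad s))) (C1_on_kernel_cos b)).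
  - destruct ln_omega_zonal_endpoints as [-> ->].
    rewrite Ropp_mult_distr_r_reverse, sin_neg. ring.
  - intros s Hs. kernel_derivative Hs.
Qed.

Lemma RInt_kernel_sin b : b <> 0 -> RInt (kernel_sin b) (-1) 1 = 0 :> R.
Proof.
  intros Hb.
  rewrite (RInt_antiderivative _ _ (fun s => - (Rad ^ 2 * Rabs (Rad ^ 2 - r ^ 2) / (b * (2 * r * Rad)))
    * cos (b * ln (omega_zonal r Rad s))) (C1_on_kernel_sin b)).
  - destruct ln_omega_zonal_endpoints as [-> ->].
    rewrite Ropp_mult_distr_r_reverse, cos_neg. ring.
  - intros s Hs. kernel_derivative Hs.
Qed.

End Kernels.

Theorem corollary5 (Rad : R) (x : pt) (b : R) :
  0 < Rad -> 0 < norm3 x -> norm3 x <> Rad -> b <> 0 ->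
  sphere_intC Rad (fun y => Cpow_pos (omega x y) (1, b)) =
    RtoC (2 * PI * Rad / norm3 x * (Rabs (Rad ^ 2 - norm3 x ^ 2) / b) *
          sin (b * ln ((Rad + norm3 x) / Rabs (Rad - norm3 x))))
  /\
  sphere_int Rad (fun y => omega x y) =
    2 * PI * Rad / norm3 x * Rabs (Rad ^ 2 - norm3 x ^ 2) *
      ln ((Rad + norm3 x) / Rabs (Rad - norm3 x)).
Proof.
  intros HR Hr Hne Hb.
  pose proof (direction_unit x Hr) as Ha.
  assert (Hw : forall t p, 0 < omega x (sph Rad t p)).
  { intros t p. rewrite omega_sph by exact Hr.
    apply omega_zonal_pos, dot_unit_bound, Ha; assumption. }
  split.
  - rewrite (sphere_intC_zonal Rad _ (kernel_cos (norm3 x) Rad b) (kernel_cos' (norm3 x) Rad b)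
      (kernel_sin (norm3 x) Rad b) (kernel_sin' (norm3 x) Rad b) _ _ _
      (C1_on_kernel_cos _ _ Hr HR Hne b) (C1_on_kernel_sin _ _ Hr HR Hne b) Ha).
    + rewrite RInt_kernel_cos, RInt_kernel_sin by assumption.
      unfold RtoC. f_equal; [field; lra | ring].
    + intros t p. rewrite Cpow_pos_1_i, scal_C_pair by apply Hw.
      unfold kernel_cos, kernel_sin. rewrite omega_sph by exact Hr. f_equal; ring.
  - rewrite (sphere_int_zonal Rad _ (kernel_cos (norm3 x) Rad 0) (kernel_cos' (norm3 x) Rad 0)
      _ _ _ (C1_on_kernel_cos _ _ Hr HR Hne 0) Ha).
    + rewrite RInt_kernel_cos_0 by assumption. field. lra.
    + intros t p. unfold kernel_cos. rewrite Rmult_0_l, cos_0, omega_sph by exact Hr. ring.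
Qed.
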